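(* Let $G$ be a graph with maximum degree $\Delta$, let $\mathrm{col}$ be a partial proper coloring of $G$ with colors in $[\Delta+1]$, let $K$ be an almost-clique of an $\epsilon$-almost-clique decomposition of $G$ (for some $\epsilon\in(0,1/3)$), and let $M$ be a colorful matching in $K$ with respect to $\mathrm{col}$. Then for all $v\in K$, \[ |\Psi_K| \ge |\widehat{K}|+1+e_v-a_v+|M|, \] where $\Psi_K=[\Delta+1]\setminus\mathrm{col}(K)$, $\widehat K$ is the set of uncolored nodes of $K$, $e_v=|N(v)\setminus K|$ and $a_v=|K\setminus N(v)|$.
   Context: A partial coloring is a map $\mathrm{col}:V\to[\Delta+1]\cup\{\bot\}$ ($\bot$ meaning uncolored) such that adjacent nodes that are both colored get different colors; $\mathrm{col}(K)$ is the set of colors assigned to colored nodes of $K$. For $\epsilon\in(0,1/3)$, an $\epsilon$-almost-clique decomposition is a partition of $V$ into $V_{\mathrm{sparse}},K_1,\ldots,K_k$ where nodes in $V_{\mathrm{sparse}}$ are $\Omega(\epsilon^2\Delta)$-sparse (sparsity $\zeta_v=\frac1\Delta(\binom{\Delta}{2}-m(N(v)))$, $m(N(v))$ the number of edges inside the neighborhood $N(v)$) and each almost-clique $K_i$ satisfies $|K_i|\le(1+\epsilon)\Delta$, $|N(v)\cap K_i|\ge(1-\epsilon)\Delta$ for $v\in K_i$, and $|N(v)\cap K_i|\le(1-\epsilon/2)\Delta$ for $v\notin K_i$. An anti-edge is a pair of distinct non-adjacent nodes. A colorful matching in $K$ is a set of pairwise disjoint anti-edges with both endpoints in $K$ such that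 the two endpoints of each anti-edge are colored with the same color, and different anti-edges of the matching have different colors. *)

From mathcomp Require Import all_boot all_order all_algebra.
Set Implicit Arguments. Unset Strict Implicit. Unset Printing Implicit Defensive.
Import Order.TTheory GRing.Theory Num.Theory.

Local Open Scope ring_scope.
Section Graphs.
Variable V : finType.
Variable adj : rel V.

Definition simple_graph : Prop := symmetric adj /\ irreflexive adj.

Definition nbhd (v : V) : {set V} := [set u | adj v u].

Definition deg (v : V) : nat := #|nbhd v|.

Definition max_degree : nat := \max_(v : V) deg v.

(* m(S): number of (undirected) edges with both endpoints in S,
   computed as (number of ordered adjacent pairs in S) / 2 *)
Definition edges_in (R : realFieldType) (S : {set V}) : R :=
  (#|[set p : V * V | [&& p.1 \in S, p.2 \in S & adj p.1 p.2]]|%N)%:R / 2.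

Definition sparsity (R : realFieldType) (Delta : nat) (v : V) : R :=
  (('C(Delta, 2))%:R - edges_in R (nbhd v)) / Delta%:R.

(* partial colouring with colours in [Delta+1]; None = uncoloured *)
Definition partial_proper_coloring (Delta : nat) (col : V -> option 'I_Delta.+1) : Prop :=
  forall u v, adj u v -> col u != None -> col v != None -> col u != col v.

Definition colors_of (Delta : nat) (col : V -> option 'I_Delta.+1) (K : {set V})
  : {set 'I_Delta.+1} := [set c | [exists u in K, col u == Some c]].

Definition Psi (Delta : nat) (col : V -> option 'I_Delta.+1) (K : {set V})
  : {set 'I_Delta.+1} := ~: colors_of col K.

Definition uncolored (Delta : nat) (col : V -> option 'I_Delta.+1) (K : {set V})
  : {set V} := [set u in K | col u == None].

Definition almost_clique (R : realFieldType) (eps : R) (Delta : nat) (K : {set V}) : Prop :=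
  [/\ (#|K|%:R <= (1 + eps) * Delta%:R),
      (forall v, v \in K -> (#|nbhd v :&: K|%:R >= (1 - eps) * Delta%:R)) &
      (forall v, v \notin K -> (#|nbhd v :&: K|%:R <= (1 - eps / 2) * Delta%:R))].

(* eps-almost-clique decomposition: V = Vsparse ⊔ K_0 ⊔ ... ⊔ K_(k-1),
   nodes of Vsparse are (c * eps^2 * Delta)-sparse for the constant c > 0
   hidden in the Omega(.) *)
Definition almost_clique_decomposition (R : realFieldType) (c eps : R) (Delta : nat)
  (Vs : {set V}) (k : nat) (Ks : 'I_k -> {set V}) : Prop :=
  [/\ (forall i j, i != j -> [disjoint Ks i & Ks j]),
      (forall i, [disjoint Vs & Ks i]),
      (forall v, v \in Vs \/ exists i, v \in Ks i),
      (forall v, v \in Vs -> sparsity R Delta v >= c * eps ^+ 2 * Delta%:R) &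
      (forall i, almost_clique eps Delta (Ks i))].

Definition anti_edge (e : {set V}) : Prop :=
  exists u w, [/\ e = [set u; w], u != w & ~~ adj u w].

Definition colorful_matching (Delta : nat) (col : V -> option 'I_Delta.+1)
  (K : {set V}) (M : {set {set V}}) : Prop :=
  [/\ (forall e, e \in M -> anti_edge e /\ e \subset K),
      (forall e f, e \in M -> f \in M -> e != f -> [disjoint e & f]),
      (forall e, e \in M -> exists c, forall u, u \in e -> col u = Some c) &
      (forall e f u w, e \in M -> f \in M -> e != f -> u \in e -> w \in f ->
         col u != col w)].

End Graphs.

From mathcomp Require Import all_boot all_order all_algebra.
From mathcomp Require Import zify.
Import Order.TTheory GRing.Theory Num.Theory.

(* Every colour of col(K) sits on a coloured node of K, and the two endpoints
   of an anti-edge of M are coloured nodes of one colour, disjoint from the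
   other anti-edges; hence |col(K)| + |M| <= |K| - |K^|.  Together with
   |Psi_K| = Delta + 1 - |col(K)| and |K| - a_v = |N(v) :&: K| = deg v - e_v
   <= Delta - e_v this gives the bound. *)

Lemma leq_card_bigcup {I T : finType} (P : {pred I}) (F : I -> {set T}) :
  #|\bigcup_(i in P) F i| <= \sum_(i in P) #|F i|.
Proof.
elim/big_rec2: _ => [|i n U _ leUn]; first by rewrite cards0.
by rewrite (leq_trans (leq_card_setU _ _).1) ?leq_add2l.
Qed.

Lemma leq_card_imset_monochromatic (T T' : finType) (f : T -> T')
    (A : {set T}) (M : {set {set T}}) :
    trivIset M -> {in M, forall e : {set T}, e \subset A} ->
    {in M, forall e : {set T}, 1 < #|e|} ->
    {in M, forall e : {set T}, {in e &, forall x y, f x = f y}} ->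
  #|f @: A| + #|M| <= #|A|.
Proof.
move=> trivM subA bigM monoM.
have coverA : cover M \subset A by apply/bigcupsP.
have card_f_cover : #|f @: cover M| <= #|M|.
  rewrite imset_cover -[#|M|]sum1_card; apply: leq_trans (leq_card_bigcup _ _) _.
  apply: leq_sum => e eM; apply/card_le1_eqP => _ _ /imsetP[x xe ->] /imsetP[y ye ->].
  exact: (monoM e eM y x ye xe).
have card_cover : 2 * #|M| <= #|cover M|.
  rewrite -(eqP trivM) mulnC -sum_nat_const; exact: leq_sum.
have card_f_A : #|f @: A| <= #|A :\: cover M| + #|M|.
  rewrite -{1}(setID A (cover M)) (setIidPr coverA) setUC imsetU.
  by rewrite (leq_trans (leq_card_setU _ _).1) ?leq_add ?leq_imset_card.
move: card_f_A; rewrite cardsD (setIidPr coverA).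
have := subset_leq_card coverA; lia.
Qed.

Section PartialColoring.
Set Implicit Arguments.

Variables (V : finType) (adj : rel V) (Delta : nat).
Variable col : V -> option 'I_Delta.+1.

Lemma card_Psi_colors_of (K : {set V}) :
  #|Psi col K| + #|colors_of col K| = Delta.+1.
Proof. by rewrite addnC cardsC card_ord. Qed.

Lemma mem_colored (K : {set V}) u :
  (u \in K :\: uncolored col K) = (u \in K) && (col u != None).
Proof. by rewrite !inE; case: (u \in K); case: (col u). Qed.

Lemma imset_colored (K : {set V}) :
  col @: (K :\: uncolored col K) = Some @: colors_of col K.
Proof.
apply/setP => -[c|]; apply/imsetP/imsetP.
- move=> [u]; rewrite mem_colored => /andP[uK _] cu.
  exists c => //; rewrite /colors_of inE; apply/existsP.
  by exists u; rewrite uK -cu eqxx.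
- move=> [c']; rewrite /colors_of inE => /existsP[u /andP[uK /eqP cu]] [->].
  by exists u; rewrite ?mem_colored ?uK ?cu.
- by move=> [u]; rewrite mem_colored => /andP[_ colu] nu; rewrite -nu in colu.
- by move=> [].
Qed.

Lemma colorful_matching_card (K : {set V}) (M : {set {set V}}) :
  colorful_matching adj col K M ->
  #|colors_of col K| + #|M| + #|uncolored col K| <= #|K|.
Proof.
move=> [anti_sub disj mono _].
set C := K :\: uncolored col K.
have UK : uncolored col K \subset K by apply/subsetP => u; rewrite inE => /andP[].
have card_C : #|C| + #|uncolored col K| = #|K|.
  by rewrite cardsD (setIidPr UK) subnK ?subset_leq_card.
have subC : {in M, forall e : {set V}, e \subset C}.
  move=> e eM; have [_ /subsetP eK] := anti_sub e eM; have [c colc] := mono e eM.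
  by apply/subsetP => u ue; rewrite mem_colored eK // colc.
have pairs : {in M, forall e : {set V}, 1 < #|e|}.
  by move=> e /anti_sub[[u [w [-> uw _]]] _]; rewrite cards2 uw.
have := @leq_card_imset_monochromatic _ _ col C M.
rewrite imset_colored card_imset; last exact: Some_inj.
rewrite -card_C leq_add2r; apply => //.
- by apply/trivIsetP => e f eM fM; exact: disj.
- by move=> e /mono[c colc] x y /colc-> /colc->.
Qed.

End PartialColoring.

Theorem claim2p1 (V : finType) (adj : rel V) (R : realFieldType) (c eps : R)
  (Delta : nat) (col : V -> option 'I_Delta.+1)
  (Vs : {set V}) (k : nat) (Ks : 'I_k -> {set V}) (i : 'I_k)
  (M : {set {set V}}) :
  simple_graph adj ->
  Delta = max_degree adj ->
  partial_proper_coloring adj col ->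
  (0 < eps)%R -> (eps < 1 / 3)%R -> (0 < c)%R ->
  almost_clique_decomposition adj c eps Delta Vs Ks ->
  colorful_matching adj col (Ks i) M ->
  forall v, v \in Ks i ->
    (#|Psi col (Ks i)|%:Z >=
       #|uncolored col (Ks i)|%:Z + 1 + #|nbhd adj v :\: Ks i|%:Z
       - #|Ks i :\: nbhd adj v|%:Z + #|M|%:Z)%R.
Proof.
move=> _ maxDelta _ _ _ _ _ matchM v _.
have := colorful_matching_card matchM.
have := card_Psi_colors_of col (Ks i).
have deg_v : #|nbhd adj v| <= Delta by rewrite maxDelta; exact: leq_bigmax.
have := cardsID (nbhd adj v) (Ks i).
have := cardsID (Ks i) (nbhd adj v); rewrite setIC.
lia.
Qed.
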